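(* Let $(M,\pi)$ be a partial $H$-module with standard dilation $((\overline M,T_\pi),\varphi)$. (i) For any proper dilation $((N,T),\theta)$ of $M$, there is a unique surjective $H$-linear map $\Phi:N\to\overline M$ such that $T_\pi\circ\Phi=\Phi\circ T$ and $\Phi\circ\theta=\varphi$. (ii) The map $\Phi$ is injective (hence bijective) if and only if the dilation $((N,T),\theta)$ is minimal.
   Context: Throughout, $k$ is a field and $H$ is a Hopf algebra over $k$ with bijective antipode $S$ and Sweedler notation $\Delta(h)=h_{(1)}\otimes h_{(2)}$. A partial $H$-module is a vector space $M$ with linear $\pi:H\to\mathrm{End}_k(M)$ satisfying, for all $h,k\in H$: - $\pi(1_H)=\mathrm{id}$; - $\pi(h)\pi(k_{(1)})\pi(S(k_{(2)}))=\pi(hk_{(1)})\pi(S(k_{(2)}))$; - $\pi(h_{(1)})\pi(S(h_{(2)}))\pi(k)=\pi(h_{(1)})\pi(S(h_{(2)})k)$; - $\pi(h)\pi(S(k_{(1)}))\pi(k_{(2)})=\pi(hS(k_{(1)}))\pi(k_{(2)})$; - $\pi(S(h_{(1)}))\pi(h_{(2)})\pi(k)=\pi(S(h_{(1)}))\pi(h_{(2)}k)$. Morphisms are linear maps commuting with all $\pi(h)$. For a left $H$-module $N$ (action $\triangleright$) and linear projection $T$, put $T_h(x)=h_{(1)}\triangleright T(S(h_{(2)})\triangleright x)$. $T$ satisfies the c-condition if $T_h\circ T=T\circ T_h$ for all $h$; then $T(N)$ is a partial $H$-module via $\pi_T(h)(x)=T(h\triangleright x)$. A dilation of $(M,\pi)$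 is $((N,T),\theta)$ with $N$ a left $H$-module, $T$ a projection on $N$ satisfying the c-condition, and $\theta:M\to T(N)$ an isomorphism of partial $H$-modules onto $(T(N),\pi_T)$. It is proper if $N$ is generated as an $H$-module by $\theta(M)$. It is minimal if $N$ contains no nonzero $H$-submodule annihilated by $T$. Standard dilation: $\operatorname{Hom}_k(H,M)$ is a left $H$-module via $(h\triangleright f)(k)=f(kh)$. Set $\varphi(m)(h)=\pi(h)(m)$, $\overline M=H\triangleright\varphi(M)\subseteq\operatorname{Hom}_k(H,M)$, and $T_\pi(f)=\varphi(f(1_H))$. *)

From HB Require Import structures.
From mathcomp Require Import all_boot all_order all_algebra.
Set Implicit Arguments. Unset Strict Implicit. Unset Printing Implicit Defensive.
Import GRing.Theory.
Local Open Scope ring_scope.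

(* The coproduct Delta(h) is represented by a finite list of pairs
   [(h_(1)^i, h_(2)^i)] with Delta(h) = sum_i h_(1)^i (x) h_(2)^i; two lists
   represent the same tensor iff all k-bilinear forms agree on them (bilinear
   forms separate points of H (x) H over a field).  Sweedler sums are sums
   over this list. *)

Section Defs.
Variable k : fieldType.

Definition klinear (U V : lmodType k) (f : U -> V) : Prop :=
  forall (c : k) (x y : U), f (c *: x + y) = c *: f x + f y.

Definition kform (U : lmodType k) (f : U -> k) : Prop :=
  forall (c : k) (x y : U), f (c *: x + y) = c * f x + f y.

Definition bilinear_form (U : lmodType k) (f : U -> U -> k) : Prop :=
  (forall a, kform (f a)) /\ (forall b, kform (fun a => f a b)).

Definition trilinear_form (U : lmodType k) (f : U -> U -> U -> k) : Prop :=
  (forall a b, kform (f a b)) /\ (forall a c, kform (fun b => f a b c)) /\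
  (forall b c, kform (fun a => f a b c)).

Definition teq2 (U : lmodType k) (s t : seq (U * U)) : Prop :=
  forall f : U -> U -> k, bilinear_form f ->
    \sum_(p <- s) f p.1 p.2 = \sum_(p <- t) f p.1 p.2.

Record hopf (H : algType k) := Hopf {
  cop : H -> seq (H * H);
  eps : H -> k;
  antip : H -> H;
  cop_lin : forall (c : k) (x y : H),
    teq2 (cop (c *: x + y)) ([seq (c *: p.1, p.2) | p <- cop x] ++ cop y);
  cop_mul : forall x y : H,
    teq2 (cop (x * y)) [seq (p.1 * q.1, p.2 * q.2) | p <- cop x, q <- cop y];
  cop_one : teq2 (cop 1) [:: (1, 1)];
  coassoc : forall (h : H) (g : H -> H -> H -> k), trilinear_form g ->
    \sum_(p <- cop h) \sum_(q <- cop p.1) g q.1 q.2 p.2 =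
    \sum_(p <- cop h) \sum_(q <- cop p.2) g p.1 q.1 q.2;
  eps_lin : kform eps;
  eps_mul : forall x y : H, eps (x * y) = eps x * eps y;
  eps_one : eps 1 = 1;
  counitl : forall h : H, \sum_(p <- cop h) eps p.1 *: p.2 = h;
  counitr : forall h : H, \sum_(p <- cop h) eps p.2 *: p.1 = h;
  antip_lin : klinear antip;
  antipl : forall h : H, \sum_(p <- cop h) antip p.1 * p.2 = eps h *: 1;
  antipr : forall h : H, \sum_(p <- cop h) p.1 * antip p.2 = eps h *: 1;
  antip_bij : bijective antip
}.

Variables (H : algType k) (HH : hopf H).
Local Notation D := (cop HH).
Local Notation S := (antip HH).

Record partial_module (M : lmodType k) (pi : H -> M -> M) : Prop := {
  pm_linH : forall m : M, klinear (fun h => pi h m);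
  pm_linM : forall h : H, klinear (pi h);
  pm_one : forall m : M, pi 1 m = m;
  pm_ax1 : forall (h g : H) (m : M),
    \sum_(p <- D g) pi h (pi p.1 (pi (S p.2) m)) =
    \sum_(p <- D g) pi (h * p.1) (pi (S p.2) m);
  pm_ax2 : forall (h g : H) (m : M),
    \sum_(p <- D h) pi p.1 (pi (S p.2) (pi g m)) =
    \sum_(p <- D h) pi p.1 (pi (S p.2 * g) m);
  pm_ax3 : forall (h g : H) (m : M),
    \sum_(p <- D g) pi h (pi (S p.1) (pi p.2 m)) =
    \sum_(p <- D g) pi (h * S p.1) (pi p.2 m);
  pm_ax4 : forall (h g : H) (m : M),
    \sum_(p <- D h) pi (S p.1) (pi p.2 (pi g m)) =
    \sum_(p <- D h) pi (S p.1) (pi (p.2 * g) m)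
}.

Record left_module (N : lmodType k) (act : H -> N -> N) : Prop := {
  lm_linH : forall x : N, klinear (fun h => act h x);
  lm_linN : forall h : H, klinear (act h);
  lm_one : forall x : N, act 1 x = x;
  lm_mul : forall (h g : H) (x : N), act (h * g) x = act h (act g x)
}.

Definition Tconj (N : lmodType k) (act : H -> N -> N) (T : N -> N) (h : H) (x : N) : N :=
  \sum_(p <- D h) act p.1 (T (act (S p.2) x)).

Record dilation (M : lmodType k) (pi : H -> M -> M)
    (N : lmodType k) (act : H -> N -> N) (T : N -> N) (theta : M -> N) : Prop := {
  dil_module : left_module act;
  dil_Tlin : klinear T;
  dil_Tproj : forall x : N, T (T x) = T x;
  dil_ccond : forall (h : H) (x : N), Tconj act T h (T x) = T (Tconj act T h x);
  dil_thlin : klinear theta;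
  dil_thinj : injective theta;
  dil_thin : forall m : M, T (theta m) = theta m;
  dil_thonto : forall x : N, exists m : M, theta m = T x;
  dil_thmor : forall (h : H) (m : M), theta (pi h m) = T (act h (theta m))
}.

Definition proper_dil (M N : lmodType k) (act : H -> N -> N) (theta : M -> N) : Prop :=
  forall x : N, exists s : seq (H * M), x = \sum_(p <- s) act p.1 (theta p.2).

Record submodule (N : lmodType k) (act : H -> N -> N) (P : N -> Prop) : Prop := {
  sub0 : P 0;
  subD : forall x y, P x -> P y -> P (x + y);
  subZ : forall (c : k) x, P x -> P (c *: x);
  subH : forall (h : H) x, P x -> P (act h x)
}.

Definition minimal_dil (N : lmodType k) (act : H -> N -> N) (T : N -> N) : Prop :=
  forall P : N -> Prop, submodule act P -> (forall x, P x -> T x = 0) ->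
    forall x, P x -> x = 0.

(* Hom_k(H,M) is realized inside the functions H -> M,
   with (h |> f)(g) = f (g h).  phi(m)(h) = pi(h)(m), so
   (h |> phi(m))(g) = pi(g h)(m), and Mbar = H |> phi(M) consists of the
   finite sums of such functions. *)
Definition phi_std (M : lmodType k) (pi : H -> M -> M) (m : M) : H -> M :=
  fun h => pi h m.

Definition in_Mbar (M : lmodType k) (pi : H -> M -> M) (f : H -> M) : Prop :=
  exists s : seq (H * M), forall g : H, f g = \sum_(p <- s) pi (g * p.1) p.2.

Definition T_std (M : lmodType k) (pi : H -> M -> M) (f : H -> M) : H -> M :=
  phi_std pi (f 1).

Record std_map (M : lmodType k) (pi : H -> M -> M)
    (N : lmodType k) (act : H -> N -> N) (T : N -> N) (theta : M -> N)
    (Phi : N -> H -> M) : Prop := {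
  Phi_in : forall x : N, in_Mbar pi (Phi x);
  Phi_lin : forall (c : k) (x y : N) (g : H),
    Phi (c *: x + y) g = c *: Phi x g + Phi y g;
  Phi_H : forall (h : H) (x : N) (g : H), Phi (act h x) g = Phi x (g * h);
  Phi_surj : forall f : H -> M, in_Mbar pi f ->
    exists x : N, forall g : H, Phi x g = f g;
  Phi_T : forall (x : N) (g : H), T_std pi (Phi x) g = Phi (T x) g;
  Phi_theta : forall (m : M) (g : H), Phi (theta m) g = phi_std pi m g
}.

Definition map_injective (M N : lmodType k) (Phi : N -> H -> M) : Prop :=
  forall x y : N, (forall g : H, Phi x g = Phi y g) -> x = y.

End Defs.

From mathcomp Require Import all_boot all_order all_algebra.
Set Implicit Arguments. Unset Strict Implicit.
Import GRing.Theory.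
Local Open Scope ring_scope.

(* Since theta identifies M with T(N), the map Phi(x)(g) := theta^-1 (T (g |> x))
   is defined on all of N; it is H-linear, and Phi(h |> theta m)(g) = pi(g h) m,
   so properness (N is spanned by the h |> theta m) gives both that Phi lands in
   Mbar and is onto, and that Phi is unique.  The kernel of Phi is
   {x | T(H |> x) = 0}, the largest H-submodule of N annihilated by T, so Phi
   is injective exactly when the dilation is minimal. *)

Section KLinear.
Variables (k : fieldType) (U V : lmodType k) (f : U -> V).
Hypothesis f_lin : klinear f.

Lemma klinear0 : f 0 = 0.
Proof.
have := f_lin 1 0 0; rewrite !scale1r addr0 => f00.
by rewrite -(addrK (f 0) (f 0)) -f00 subrr.
Qed.

Lemma klinearD x y : f (x + y) = f x + f y.
Proof. by have := f_lin 1 x y; rewrite !scale1r. Qed.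

Lemma klinearZ c x : f (c *: x) = c *: f x.
Proof. by have := f_lin c x 0; rewrite klinear0 !addr0. Qed.

Lemma klinearB x y : f (x - y) = f x - f y.
Proof. by rewrite klinearD -scaleN1r klinearZ scaleN1r. Qed.

Lemma klinear_sum (I : Type) (s : seq I) (F : I -> U) :
  f (\sum_(i <- s) F i) = \sum_(i <- s) f (F i).
Proof.
elim: s => [|a s IH]; first by rewrite !big_nil klinear0.
by rewrite !big_cons klinearD IH.
Qed.

End KLinear.

Section TKernel.
Variables (k : fieldType) (H : algType k) (N : lmodType k).
Variables (act : H -> N -> N) (T : N -> N).
Hypotheses (act_mod : left_module act) (T_lin : klinear T).

Definition Tkernel (x : N) : Prop := forall g : H, T (act g x) = 0.

Lemma submodule_Tkernel : submodule act Tkernel.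
Proof.
have act_lin := lm_linN act_mod.
split.
- by move=> g; rewrite klinear0 // klinear0.
- by move=> x y Kx Ky g; rewrite !klinearD // Kx Ky addr0.
- by move=> c x Kx g; rewrite !klinearZ // Kx scaler0.
- by move=> h x Kx g; rewrite -(lm_mul act_mod) Kx.
Qed.

Lemma Tkernel_annihilated x : Tkernel x -> T x = 0.
Proof. by rewrite -{2}(lm_one act_mod x); apply. Qed.

Lemma sub_Tkernel (P : N -> Prop) : submodule act P ->
  (forall x, P x -> T x = 0) -> forall x, P x -> Tkernel x.
Proof. by move=> subP PT x Px g; apply/PT/(subH subP). Qed.

Lemma minimal_dilP : minimal_dil act T <-> (forall x, Tkernel x -> x = 0).
Proof.
split=> [minT | Ktriv P subP PT x Px].
  exact: minT submodule_Tkernel Tkernel_annihilated.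
exact/Ktriv/(sub_Tkernel subP PT).
Qed.

End TKernel.

Section StandardMap.
Variables (k : fieldType) (H : algType k) (HH : hopf H).
Variables (M : lmodType k) (pi : H -> M -> M).
Variables (N : lmodType k) (act : H -> N -> N) (T : N -> N) (theta : M -> N).
Hypothesis dil : dilation HH pi act T theta.

Let act_mod := dil_module dil.
Let act_lin := lm_linN act_mod.

Lemma exists_theta_preimage (x : N) : exists m : M, theta m == T x.
Proof. by have [m thm] := dil_thonto dil x; exists m; apply/eqP. Qed.

Definition theta_inv (x : N) : M := xchoose (exists_theta_preimage x).

Lemma theta_invE x : theta (theta_inv x) = T x.
Proof. exact/eqP/(xchooseP (exists_theta_preimage x)). Qed.

Lemma theta_inv_lin : klinear theta_inv.
Proof.
move=> c x y; apply: (dil_thinj dil).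
by rewrite theta_invE (dil_Tlin dil) (dil_thlin dil) !theta_invE.
Qed.

Lemma theta_inv_act h m : theta_inv (act h (theta m)) = pi h m.
Proof. by apply: (dil_thinj dil); rewrite theta_invE (dil_thmor dil). Qed.

Definition std_Phi (x : N) (g : H) : M := theta_inv (act g x).

Lemma std_Phi_lin g : klinear (std_Phi ^~ g).
Proof. by move=> c x y; rewrite /std_Phi act_lin theta_inv_lin. Qed.

Lemma std_Phi_span g (s : seq (H * M)) :
  std_Phi (\sum_(p <- s) act p.1 (theta p.2)) g = \sum_(p <- s) pi (g * p.1) p.2.
Proof.
rewrite (klinear_sum (std_Phi_lin g)); apply: eq_bigr => p _.
by rewrite /std_Phi -(lm_mul act_mod) theta_inv_act.
Qed.

Hypothesis dil_proper : proper_dil act theta.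

Lemma std_map_std_Phi : std_map pi act T theta std_Phi.
Proof.
split.
- by move=> x; have [s ->] := dil_proper x; exists s => g; apply: std_Phi_span.
- by move=> c x y g; apply: std_Phi_lin.
- by move=> h x g; rewrite /std_Phi (lm_mul act_mod).
- move=> f [s fE]; exists (\sum_(p <- s) act p.1 (theta p.2)) => g.
  by rewrite std_Phi_span fE.
- by move=> x g; rewrite /T_std /phi_std /std_Phi (lm_one act_mod) -theta_inv_act theta_invE.
- by move=> m g; rewrite /std_Phi theta_inv_act.
Qed.

Lemma std_map_unique Phi : std_map pi act T theta Phi ->
  forall x g, Phi x g = std_Phi x g.
Proof.
move=> PhiS x g; have [s ->] := dil_proper x.
rewrite std_Phi_span (klinear_sum (fun c x y => Phi_lin PhiS c x y g)).
by apply: eq_bigr => p _; rewrite (Phi_H PhiS) (Phi_theta PhiS).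
Qed.

Lemma std_Phi_eq0 x : (forall g, std_Phi x g = 0) <-> Tkernel act T x.
Proof.
split=> Phix0 g.
  by rewrite -theta_invE [theta_inv _]Phix0 (klinear0 (dil_thlin dil)).
by apply: (dil_thinj dil); rewrite theta_invE Phix0 (klinear0 (dil_thlin dil)).
Qed.

Lemma std_Phi_injectiveP :
  map_injective std_Phi <-> (forall x, Tkernel act T x -> x = 0).
Proof.
split=> [Phi_inj x /std_Phi_eq0 Phix0 | Ktriv x y Phixy].
  by apply: Phi_inj => g; rewrite Phix0 (klinear0 (std_Phi_lin g)).
apply/eqP; rewrite -subr_eq0; apply/eqP/Ktriv/std_Phi_eq0 => g.
by rewrite (klinearB (std_Phi_lin g)) Phixy subrr.
Qed.

End StandardMap.

Theorem mainTheorem10 (k : fieldType) (H : algType k) (HH : hopf H)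
  (M : lmodType k) (pi : H -> M -> M) (Hpi : partial_module HH pi)
  (N : lmodType k) (act : H -> N -> N) (T : N -> N) (theta : M -> N)
  (Hdil : dilation HH pi act T theta) (Hprop : proper_dil act theta) :
  exists Phi : N -> H -> M,
    [/\ std_map pi act T theta Phi,
        (forall Phi' : N -> H -> M, std_map pi act T theta Phi' ->
           forall (x : N) (g : H), Phi' x g = Phi x g) &
        (map_injective Phi <-> minimal_dil act T)].
Proof.
exists (std_Phi Hdil); split.
- exact: std_map_std_Phi.
- exact: std_map_unique.
- apply: iff_trans (std_Phi_injectiveP Hdil) _.
  exact: iff_sym (minimal_dilP (dil_module Hdil) (dil_Tlin Hdil)).
Qed.
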